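(* For the exact polytrope with index $n=5$, the function $$F(U,Q)=\big[U(4-7Q)-3(1-2Q)\big]\,U^{1/2}Q^{3/2}(1-U)^{-3/2}(1-Q)^{-5/2}$$ is constant along every solution in $(0,1)^2$ of the planar system $$\frac{dU}{d\lambda}=U(1-U)\big[(1-Q)(3-4U)-5Q(1-U)\big],\qquad \frac{dQ}{d\lambda}=Q(1-Q)\big[(2U-1)(1-Q)+Q(1-U)\big].$$ The fixed point $(1/3,1/3)$ corresponds to $F=-1/4$, the regular orbit corresponds to $F=0$, and the level sets $\{F=C\}$ with $-1/4<C<0$ are closed orbits around $(1/3,1/3)$.
   Context: This planar system is the restriction to $\{\Omega=0\}$ (the ''polytropic subset'') of the system for $(U,Q,\Omega)$ describing Newtonian static spherically symmetric perfect fluids, for index $n_0=5$; $U=u/(1+u)$, $Q=q/(1+q)$ with $u=4\pi r^3\rho/m$, $q=m/(r\eta)$, $\eta=\int_0^p dp'/\rho(p')$. The regular orbit is the one emanating from $(U,Q)=(3/4,0)$. *)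

From Stdlib Require Import Reals Lra.
From Coquelicot Require Import Coquelicot.
Open Scope R_scope.

Definition VU (U Q : R) : R :=
  U * (1 - U) * ((1 - Q) * (3 - 4 * U) - 5 * Q * (1 - U)).
Definition VQ (U Q : R) : R :=
  Q * (1 - Q) * ((2 * U - 1) * (1 - Q) + Q * (1 - U)).

(* The first integral F; fractional powers via Rpower (bases are > 0 on (0,1)^2). *)
Definition Fint (U Q : R) : R :=
  (U * (4 - 7 * Q) - 3 * (1 - 2 * Q))
  * Rpower U (1/2) * Rpower Q (3/2)
  * Rpower (1 - U) (-3/2) * Rpower (1 - Q) (-5/2).

Definition in_box (U Q : R) : Prop := 0 < U < 1 /\ 0 < Q < 1.

Definition is_solution (a b : Rbar) (U Q : R -> R) : Prop :=
  forall l : R, Rbar_lt a l -> Rbar_lt l b ->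
    in_box (U l) (Q l) /\
    is_derive U l (VU (U l) (Q l)) /\
    is_derive Q l (VQ (U l) (Q l)).

From Stdlib Require Import Reals Lra Psatz Ranalysis5 ClassicalEpsilon.
From Coquelicot Require Import Coquelicot.
Open Scope R_scope.

(* On the open square, F agrees with an algebraic expression in square roots whose derivative
   along the vector field vanishes; hence F is constant on solutions, and on the regular orbit it
   equals its limit F(3/4, 0) = 0.
   For the closed orbits, put u = U/(1-U), q = Q/(1-Q), w^4 = u q and p = w (1/2 - q). Then
   F = w^6 - 3w^2/4 + 3p^2 = 3 (Y(w)^2 + p^2) - 1/4 with Y increasing, so the level set F = C is
   the circle Y(w)^2 + p^2 = rho^2, rho^2 = (C + 1/4)/3, parametrised by an angle theta. Along it
   the vector field is a positive multiple of d/dtheta, and inverting the time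
   lambda(theta) = int d(lambda)/d(theta) turns the parametrisation into a periodic solution.
   Finally, {F <= C} stays at distance C^2/4 from the boundary of the square, so a path from the
   centre that leaves the square meets {F = C} at the end of its first stay in {F < C}. *)

Definition Fsqrt (U Q : R) : R :=
  (U * (4 - 7 * Q) - 3 * (1 - 2 * Q)) * sqrt U * (Q * sqrt Q)
  / ((1 - U) * sqrt (1 - U) * ((1 - Q) * (1 - Q) * sqrt (1 - Q))).

Lemma Rpower_3_2 x : 0 < x -> Rpower x (3/2) = x * sqrt x.
Proof.
intros Hx. replace (3/2) with (1 + /2) by field.
now rewrite Rpower_plus, Rpower_1, Rpower_sqrt.
Qed.

Lemma Rpower_5_2 x : 0 < x -> Rpower x (5/2) = x * x * sqrt x.
Proof.
intros Hx. replace (5/2) with (INR 2 + /2) by (simpl; field).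
rewrite Rpower_plus, Rpower_pow, Rpower_sqrt by assumption. simpl; ring.
Qed.

Lemma Fint_eq_Fsqrt U Q : in_box U Q -> Fint U Q = Fsqrt U Q.
Proof.
intros [[U0 U1] [Q0 Q1]]. unfold Fint, Fsqrt.
replace (-3/2) with (-(3/2)) by field. replace (-5/2) with (-(5/2)) by field.
replace (1/2) with (/2) by field.
rewrite !Rpower_Ropp, Rpower_sqrt, !Rpower_3_2, Rpower_5_2 by lra.
assert (0 < sqrt (1 - U)) by (apply sqrt_lt_R0; lra).
assert (0 < sqrt (1 - Q)) by (apply sqrt_lt_R0; lra).
field; repeat split; apply Rgt_not_eq; nra.
Qed.

Lemma inv_2_sqrt x : 0 < x -> / (2 * sqrt x) = sqrt x / (2 * x).
Proof.
intros Hx. assert (0 < sqrt x) by (apply sqrt_lt_R0; lra).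
rewrite <- (sqrt_sqrt x) at 3 by lra. field. lra.
Qed.

Lemma is_derive_Fsqrt_along_flow (U Q : R -> R) l :
  in_box (U l) (Q l) ->
  is_derive U l (VU (U l) (Q l)) -> is_derive Q l (VQ (U l) (Q l)) ->
  is_derive (fun x => Fsqrt (U x) (Q x)) l 0.
Proof.
intros [[U0 U1] [Q0 Q1]] dU dQ.
assert (0 < sqrt (U l)) by (apply sqrt_lt_R0; lra).
assert (0 < sqrt (Q l)) by (apply sqrt_lt_R0; lra).
assert (0 < sqrt (1 + - U l)) by (apply sqrt_lt_R0; lra).
assert (0 < sqrt (1 + - Q l)) by (apply sqrt_lt_R0; lra).
unfold Fsqrt. auto_derive.
- repeat split; try (eexists; eassumption); try lra.
  apply Rgt_not_eq; repeat apply Rmult_lt_0_compat; lra.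
- change (Derive (fun x => U x) l) with (Derive U l).
  change (Derive (fun x => Q x) l) with (Derive Q l).
  rewrite (is_derive_unique _ _ _ dU), (is_derive_unique _ _ _ dQ), !inv_2_sqrt by lra.
  unfold VU, VQ. field. repeat split; lra.
Qed.

Lemma is_derive_0_eq (f : R -> R) a b :
  (forall x, Rmin a b <= x <= Rmax a b -> is_derive f x 0) -> f a = f b.
Proof.
intros Hf.
destruct (MVT_gen f a b (fun _ => 0)) as [c [_ Hc]]; [| |lra].
- intros x Hx. apply Hf. lra.
- intros x Hx. apply continuity_pt_filterlim, (ex_derive_continuous (V:=R_NormedModule)).
  eexists. now apply Hf.
Qed.

Lemma Rbar_lt_between (a b : Rbar) (l1 l2 x : R) :
  Rbar_lt a l1 -> Rbar_lt l1 b -> Rbar_lt a l2 -> Rbar_lt l2 b ->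
  Rmin l1 l2 <= x <= Rmax l1 l2 -> Rbar_lt a x /\ Rbar_lt x b.
Proof.
unfold Rmin, Rmax. intros h1 h2 h3 h4 hx.
destruct a, b; simpl in *; try tauto; destruct (Rle_dec l1 l2); split; auto; lra.
Qed.

Lemma Fint_constant_on_solution (a b : Rbar) (U Q : R -> R) :
  is_solution a b U Q ->
  forall l1 l2 : R, Rbar_lt a l1 -> Rbar_lt l1 b -> Rbar_lt a l2 -> Rbar_lt l2 b ->
    Fint (U l1) (Q l1) = Fint (U l2) (Q l2).
Proof.
intros HS l1 l2 h1 h2 h3 h4.
rewrite !Fint_eq_Fsqrt by (apply HS; assumption).
apply (is_derive_0_eq (fun x => Fsqrt (U x) (Q x))).
intros x Hx. destruct (Rbar_lt_between a b l1 l2 x h1 h2 h3 h4 Hx) as [k1 k2].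
destruct (HS x k1 k2) as [B [dU dQ]]. now apply is_derive_Fsqrt_along_flow.
Qed.

Lemma centre_fixed_point :
  VU (1/3) (1/3) = 0 /\ VQ (1/3) (1/3) = 0 /\ Fint (1/3) (1/3) = -1/4.
Proof.
split; [unfold VU; field|split; [unfold VQ; field|]].
rewrite Fint_eq_Fsqrt by (split; lra). unfold Fsqrt.
replace (1 - 1/3) with (2/3) by field.
assert (E1 := sqrt_sqrt (1/3) ltac:(lra)). assert (E2 := sqrt_sqrt (2/3) ltac:(lra)).
assert (P1 := sqrt_lt_R0 (1/3) ltac:(lra)). assert (P2 := sqrt_lt_R0 (2/3) ltac:(lra)).
generalize dependent (sqrt (2/3)). generalize dependent (sqrt (1/3)). intros a Ea Pa b Eb Pb.
replace (_ / _) with (- 4/27 * (a * a) / (8/27 * (b * b))) by (field; lra).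
rewrite Ea, Eb. field.
Qed.

Section RealContinuity.

Context {T : UniformSpace} (x : T) (f g : T -> R).
Hypotheses (cf : continuous f x) (cg : continuous g x).

Lemma continuous_Rplus : continuous (fun y => f y + g y) x.
Proof. exact (continuous_plus f g x cf cg). Qed.

Lemma continuous_Rminus : continuous (fun y => f y - g y) x.
Proof. exact (continuous_minus f g x cf cg). Qed.

Lemma continuous_Rmult : continuous (fun y => f y * g y) x.
Proof. exact (continuous_mult f g x cf cg). Qed.

Lemma continuous_Ropp : continuous (fun y => - f y) x.
Proof. exact (continuous_opp f x cf). Qed.

Lemma continuous_Rinv_nz : f x <> 0 -> continuous (fun y => / f y) x.
Proof. intros H. exact (continuous_comp f Rinv x cf (continuous_Rinv _ H)). Qed.

Lemma continuous_sqrt_of : continuous (fun y => sqrt (f y)) x.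
Proof. exact (continuous_comp f sqrt x cf (continuous_sqrt _)). Qed.

Lemma continuous_Rpower_of (c : R) : 0 < f x -> continuous (fun y => Rpower (f y) c) x.
Proof.
intros H. unfold Rpower.
apply (continuous_comp (fun y => c * ln (f y)) exp), continuous_exp.
apply (continuous_mult (fun _ => c) (fun y => ln (f y))); [apply continuous_const|].
exact (continuous_comp f ln x cf (continuous_ln _ H)).
Qed.

End RealContinuity.

Ltac solve_continuity :=
  unfold Rdiv;
  repeat match goal with
  | |- continuous (fun _ => ?c) _ => apply continuous_const
  | |- continuous (fun y => fst y) _ => apply continuous_fst
  | |- continuous (fun y => snd y) _ => apply continuous_snd
  | |- continuous (fun y => @?f y + @?g y) ?x => apply (continuous_Rplus x f g)
  | |- continuous (fun y => @?f y - @?g y) ?x => apply (continuous_Rminus x f g)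
  | |- continuous (fun y => @?f y * @?g y) ?x => apply (continuous_Rmult x f g)
  | |- continuous (fun y => - @?f y) ?x => apply (continuous_Ropp x f)
  | |- continuous (fun y => / @?f y) ?x => apply (continuous_Rinv_nz x f)
  | |- continuous (fun y => sqrt (@?f y)) ?x => apply (continuous_sqrt_of x f)
  | |- continuous (fun y => Rpower (@?f y) ?c) ?x => apply (continuous_Rpower_of x f)
  end.

Lemma Fint_continuous u q :
  in_box u q -> continuous (fun X : R * R => Fint (fst X) (snd X)) (u, q).
Proof. intros [[U0 U1] [Q0 Q1]]. unfold Fint. solve_continuity; simpl; lra. Qed.

Lemma Fsqrt_continuous_regular_point :
  continuous (fun X : R * R => Fsqrt (fst X) (snd X)) (3/4, 0).
Proof.
unfold Fsqrt. solve_continuity; simpl.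
assert (0 < sqrt (1 - 3/4)) by (apply sqrt_lt_R0; lra).
assert (0 < sqrt (1 - 0)) by (apply sqrt_lt_R0; lra).
apply Rgt_not_eq. repeat apply Rmult_lt_0_compat; lra.
Qed.

Lemma filterlim_locally_pair {T : Type} {F : (T -> Prop) -> Prop} {FF : Filter F}
  (f g : T -> R) (u q : R) :
  filterlim f F (locally u) -> filterlim g F (locally q) ->
  filterlim (fun y => (f y, g y)) F (locally (u, q)).
Proof.
intros Hf Hg P [eps HP]. unfold filtermap.
apply (filter_imp (F := F) (fun y => ball u eps (f y) /\ ball q eps (g y))).
- intros y Hy. now apply HP.
- apply filter_and; [apply Hf | apply Hg]; apply locally_ball.
Qed.

Lemma Fint_regular_orbit (b : Rbar) (U Q : R -> R) :
  is_solution m_infty b U Q -> is_lim U m_infty (3/4) -> is_lim Q m_infty 0 ->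
  forall l : R, Rbar_lt l b -> Fint (U l) (Q l) = 0.
Proof.
intros HS LU LQ l Hl.
assert (Hbefore : forall y, y < l -> Fsqrt (U y) (Q y) = Fint (U l) (Q l)).
{ intros y Hy. assert (Hyb : Rbar_lt y b) by (destruct b; simpl in *; auto; lra).
  rewrite <- Fint_eq_Fsqrt by now apply HS.
  now apply (Fint_constant_on_solution m_infty b). }
assert (Hlim : is_lim (fun y => Fsqrt (U y) (Q y)) m_infty 0).
{ replace 0 with (Fsqrt (3/4) 0) by (unfold Fsqrt, Rdiv; rewrite sqrt_0; ring).
  apply (filterlim_comp R (R * R) R (fun y => (U y, Q y)) (fun X => Fsqrt (fst X) (snd X))
           _ (locally (3/4, 0))).
  - exact (filterlim_locally_pair U Q _ _ LU LQ).
  - exact Fsqrt_continuous_regular_point. }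
assert (Hconst : is_lim (fun _ => Fint (U l) (Q l)) m_infty 0).
{ eapply is_lim_ext_loc; [|exact Hlim]. exists l. intros y Hy. now apply Hbefore. }
apply is_lim_unique in Hconst. rewrite Lim_const in Hconst. now injection Hconst.
Qed.

(* With u = U/(1-U) and q = Q/(1-Q), these are the inverse of w^4 = u q, p = w (1/2 - q);
   in the coordinates (w, p) the first integral becomes [energy]. *)
Definition U_wp (w p : R) : R := 2 * w^5 / (w - 2 * p + 2 * w^5).
Definition Q_wp (w p : R) : R := (w - 2 * p) / (3 * w - 2 * p).
Definition energy (w p : R) : R := w^6 - 3/4 * (w * w) + 3 * (p * p).

Lemma Fsqrt_odds U Q : in_box U Q ->
  Fsqrt U Q = (U/(1-U) + 3 * (Q/(1-Q)) - 3) * (Q/(1-Q)) * sqrt (U/(1-U) * (Q/(1-Q))).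
Proof.
intros [[U0 U1] [Q0 Q1]].
rewrite sqrt_mult, !sqrt_div by (try apply Rlt_le, Rdiv_lt_0_compat; lra).
unfold Fsqrt.
assert (0 < sqrt U) by (apply sqrt_lt_R0; lra).
assert (0 < sqrt Q) by (apply sqrt_lt_R0; lra).
assert (0 < sqrt (1-U)) by (apply sqrt_lt_R0; lra).
assert (0 < sqrt (1-Q)) by (apply sqrt_lt_R0; lra).
field. repeat split; lra.
Qed.

Lemma in_box_wp w p : 0 < w -> 0 < w - 2 * p -> in_box (U_wp w p) (Q_wp w p).
Proof.
intros Hw Hp. assert (0 < w^5) by (apply pow_lt; lra).
unfold in_box, U_wp, Q_wp. repeat split.
- apply Rdiv_lt_0_compat; lra.
- rewrite <- Rdiv_lt_1; lra.
- apply Rdiv_lt_0_compat; lra.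
- rewrite <- Rdiv_lt_1; lra.
Qed.

Lemma Fint_wp w p : 0 < w -> 0 < w - 2 * p -> Fint (U_wp w p) (Q_wp w p) = energy w p.
Proof.
intros Hw Hp. assert (0 < w^5) by (apply pow_lt; lra).
rewrite Fint_eq_Fsqrt, Fsqrt_odds by now apply in_box_wp.
replace (U_wp w p / (1 - U_wp w p)) with (2 * w^5 / (w - 2 * p)) by (unfold U_wp; field; lra).
replace (Q_wp w p / (1 - Q_wp w p)) with ((w - 2 * p) / (2 * w)) by (unfold Q_wp; field; lra).
replace (2 * w^5 / (w - 2 * p) * ((w - 2 * p) / (2 * w))) with ((w * w) * (w * w))
  by (field; lra).
rewrite sqrt_square by nra. unfold energy. field. lra.
Qed.

Lemma wp_of_in_box U Q : in_box U Q ->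
  exists w p, 0 < w /\ 0 < w - 2 * p /\ U_wp w p = U /\ Q_wp w p = Q.
Proof.
intros [[U0 U1] [Q0 Q1]].
set (u := U / (1 - U)). set (q := Q / (1 - Q)).
assert (u0 : 0 < u) by (apply Rdiv_lt_0_compat; lra).
assert (q0 : 0 < q) by (apply Rdiv_lt_0_compat; lra).
set (w := sqrt (sqrt (u * q))).
assert (s0 : 0 < sqrt (u * q)) by (apply sqrt_lt_R0; nra).
assert (w0 : 0 < w) by (apply sqrt_lt_R0; lra).
assert (w4 : w^4 = u * q).
{ replace (w^4) with ((w * w) * (w * w)) by ring. unfold w.
  rewrite sqrt_sqrt by lra. apply sqrt_sqrt. nra. }
exists w, (w * (1/2 - q)). repeat split; [lra | nra | |].
- unfold U_wp. replace (w^5) with (w * (u * q)) by (rewrite <- w4; ring).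
  transitivity (u / (1 + u)); [field; split; nra | unfold u; field; lra].
- unfold Q_wp. transitivity (q / (1 + q)); [field; split; nra | unfold q; field; lra].
Qed.

(* Along a level set of [energy], the point (Yw w, p) moves on a circle. *)
Definition Yw (w : R) : R := (2 * (w * w) - 1) * sqrt ((w * w + 1) / 12).
Definition dYw (w : R) : R := w * (6 * (w * w) + 3) / (w * w + 1) * sqrt ((w * w + 1) / 12).

Lemma Yw_sq w : Yw w * Yw w = (4 * w^6 - 3 * (w * w) + 1) / 12.
Proof.
unfold Yw. set (r := sqrt ((w * w + 1) / 12)).
transitivity ((2 * (w * w) - 1) * (2 * (w * w) - 1) * (r * r)); [ring|].
unfold r. rewrite sqrt_sqrt by nra. field.
Qed.

Lemma energy_Yw w p : energy w p = 3 * (Yw w * Yw w + p * p) - 1/4.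
Proof. rewrite Yw_sq. unfold energy. field. Qed.

Lemma energy_ge w p : -1/4 <= energy w p.
Proof. rewrite energy_Yw. nra. Qed.

Lemma dYw_pos w : 0 < w -> 0 < dYw w.
Proof.
intros Hw. unfold dYw. assert (0 < sqrt ((w * w + 1) / 12)) by (apply sqrt_lt_R0; nra).
apply Rmult_lt_0_compat; [apply Rdiv_lt_0_compat|]; nra.
Qed.

Lemma is_derive_Yw w : 0 < w -> is_derive Yw w (dYw w).
Proof.
intros Hw. unfold Yw, dYw. auto_derive; [nra|].
rewrite inv_2_sqrt by nra.
assert (0 < sqrt ((w * w + 1) / 12)) by (apply sqrt_lt_R0; nra).
unfold Rdiv in *. field. nra.
Qed.

Lemma Yw_dYw w : 0 < w -> Yw w * dYw w = w^5 - w / 4.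
Proof.
intros Hw. unfold Yw, dYw. set (r := sqrt ((w * w + 1) / 12)).
transitivity ((2 * (w * w) - 1) * (w * (6 * (w * w) + 3) / (w * w + 1)) * (r * r)); [ring|].
unfold r. rewrite sqrt_sqrt by nra. field. nra.
Qed.

Lemma Yw_lt a b : 0 < a -> a < b -> Yw a < Yw b.
Proof.
intros Ha Hab.
destruct (MVT_gen Yw a b dYw) as [c [Hc E]].
- intros x Hx. apply is_derive_Yw. rewrite Rmin_left in Hx; lra.
- intros x Hx. apply continuity_pt_filterlim, (ex_derive_continuous (V:=R_NormedModule)).
  exists (dYw x). apply is_derive_Yw. rewrite Rmin_left in Hx; lra.
- rewrite Rmin_left, Rmax_right in Hc by lra.
  assert (0 < dYw c) by (apply dYw_pos; lra). nra.
Qed.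

Lemma Yw_inj a b : 0 < a -> 0 < b -> Yw a = Yw b -> a = b.
Proof.
intros Ha Hb E. destruct (Rtotal_order a b) as [l|[e|l]]; auto;
  apply Yw_lt in l; lra.
Qed.

(* Trigonometric (Viete) solution of the cubic [Yw (sqrt c) = y] in c = w^2. *)
Definition Yinv (y : R) : R := sqrt (cos (PI/3 - 2/3 * asin (sqrt 6 * y))).

Lemma asin_small s : s * s < 1/2 -> - (PI/4) < asin s < PI/4.
Proof.
intros Hs. rewrite asin_atan by nra.
assert (Hr : 0 < sqrt (1 - s²)) by (apply sqrt_lt_R0; unfold Rsqr; lra).
assert (Er : sqrt (1 - s²) * sqrt (1 - s²) = 1 - s * s) by (apply sqrt_sqrt; unfold Rsqr; lra).
assert (Ht : -1 < s / sqrt (1 - s²) < 1).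
{ split; [apply Rlt_div_r | apply Rlt_div_l]; nra. }
assert (A1 := atan_increasing _ _ (proj1 Ht)).
assert (A2 := atan_increasing _ _ (proj2 Ht)).
replace (-1) with (- (1)) in A1 by ring. rewrite atan_opp, atan_1 in A1. rewrite atan_1 in A2.
lra.
Qed.

Lemma cos_3a a : cos (3 * a) = 4 * cos a * cos a * cos a - 3 * cos a.
Proof.
replace (3 * a) with (2 * a + a) by ring.
rewrite cos_plus, cos_2a, sin_2a.
assert (E := sin2_cos2 a). unfold Rsqr in E.
transitivity (cos a * (cos a * cos a - 3 * (sin a * sin a))); [ring|].
replace (sin a * sin a) with (1 - cos a * cos a) by lra. ring.
Qed.

Lemma eq_of_sq_eq x y : x * x = y * y -> 0 <= x * y -> x = y.
Proof. intros E S. assert ((x - y) * (x + y) = 0) by lra. destruct (Rmult_integral _ _ H); nra. Qed.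

Lemma sqrt6_mult_sq y : (sqrt 6 * y) * (sqrt 6 * y) = 6 * (y * y).
Proof.
transitivity (sqrt 6 * sqrt 6 * (y * y)); [ring|]. rewrite sqrt_sqrt by lra. ring.
Qed.

Lemma Yinv_cos_pos y : y * y < 1/12 -> 0 < cos (PI/3 - 2/3 * asin (sqrt 6 * y)).
Proof.
intros Hy. assert (Ha := asin_small (sqrt 6 * y) ltac:(rewrite sqrt6_mult_sq; lra)).
assert (PI0 := PI_RGT_0). apply cos_gt_0; lra.
Qed.

Lemma cos_third_cubic a :
  4 * cos (PI/3 - 2/3 * a) ^ 3 - 3 * cos (PI/3 - 2/3 * a) = 2 * (sin a * sin a) - 1.
Proof.
replace (4 * cos (PI/3 - 2/3 * a) ^ 3 - 3 * cos (PI/3 - 2/3 * a))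
  with (cos (3 * (PI/3 - 2/3 * a))) by (rewrite cos_3a; ring).
replace (3 * (PI/3 - 2/3 * a)) with (PI - 2 * a) by field.
rewrite Rtrigo_facts.cos_pi_minus, cos_2a_sin. ring.
Qed.

Lemma cos_third_sign a : - (PI/4) < a < PI/4 ->
  0 <= (2 * cos (PI/3 - 2/3 * a) - 1) * sin a.
Proof.
intros Ha. pose proof PI_RGT_0. pose proof cos_PI3.
destruct (Rtotal_order a 0) as [h|[->|h]].
- assert (sin a < 0) by (apply sin_lt_0_var; lra).
  assert (cos (PI/3 - 2/3 * a) < cos (PI/3)) by (apply cos_decreasing_1; lra). nra.
- rewrite sin_0. lra.
- assert (0 < sin a) by (apply sin_gt_0; lra).
  assert (cos (PI/3) < cos (PI/3 - 2/3 * a)) by (apply cos_decreasing_1; lra). nra.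
Qed.

Lemma Yinv_spec y : y * y < 1/12 -> 0 < Yinv y /\ Yw (Yinv y) = y.
Proof.
intros Hy.
assert (c0 := Yinv_cos_pos y Hy).
assert (Hs := sqrt6_mult_sq y).
assert (Ha : - (PI/4) < asin (sqrt 6 * y) < PI/4) by (apply asin_small; lra).
assert (Sa : sin (asin (sqrt 6 * y)) = sqrt 6 * y) by (apply sin_asin; split; nra).
pose proof (cos_third_cubic (asin (sqrt 6 * y))) as Hc3.
pose proof (cos_third_sign _ Ha) as Hsign.
rewrite Sa, Hs in *.
set (c := cos (PI/3 - 2/3 * asin (sqrt 6 * y))) in *.
assert (0 <= (2 * c - 1) * y).
{ assert (0 < sqrt 6) by (apply sqrt_lt_R0; lra). nra. }
assert (Ew : Yinv y * Yinv y = c) by (apply sqrt_sqrt; lra).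
split; [unfold Yinv; apply sqrt_lt_R0; exact c0|].
apply eq_of_sq_eq.
- rewrite Yw_sq. replace (Yinv y ^ 6) with (c ^ 3) by (rewrite <- Ew; ring). lra.
- unfold Yw. rewrite Ew.
  pose proof (sqrt_pos ((c + 1) / 12)).
  replace ((2 * c - 1) * sqrt ((c + 1) / 12) * y) with ((2 * c - 1) * y * sqrt ((c + 1) / 12))
    by ring.
  apply Rmult_le_pos; lra.
Qed.

Lemma is_derive_Yinv y : y * y < 1/12 -> is_derive Yinv y (/ dYw (Yinv y)).
Proof.
intros Hy. destruct (Yinv_spec y Hy) as [Hpos _].
assert (Hs := sqrt6_mult_sq y).
assert (Hd : ex_derive Yinv y).
{ unfold Yinv. auto_derive. repeat split; [|apply Yinv_cos_pos; lra].
  apply ex_derive_Reals_1, derivable_pt_asin. split; nra. }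
set (r := sqrt (1/12)).
assert (Er : r * r = 1/12) by (apply sqrt_sqrt; lra).
assert (r0 : 0 < r) by (apply sqrt_lt_R0; lra).
assert (Hloc : locally y (fun t => t = Yw (Yinv t))).
{ apply (locally_interval _ y (- r) r); simpl; try nra.
  intros t Ht1 Ht2. symmetry. apply Yinv_spec. nra. }
assert (Hid : is_derive (fun t => Yw (Yinv t)) y (Derive Yinv y * dYw (Yinv y))).
{ apply (is_derive_comp Yw Yinv). now apply is_derive_Yw. now apply Derive_correct. }
assert (Hone : is_derive (fun t => Yw (Yinv t)) y 1).
{ apply (is_derive_ext_loc (fun t => t)); [exact Hloc | auto_derive; trivial]. }
assert (E := is_derive_unique _ _ _ Hid). rewrite (is_derive_unique _ _ _ Hone) in E.
assert (0 < dYw (Yinv y)) by now apply dYw_pos.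
replace (/ dYw (Yinv y)) with (Derive Yinv y) by (field_simplify_eq; lra).
now apply Derive_correct.
Qed.

Definition orbit_w (rho th : R) : R := Yinv (rho * cos th).
Definition orbit_p (rho th : R) : R := - rho * sin th.

Definition orbit_U (rho th : R) : R := U_wp (orbit_w rho th) (orbit_p rho th).
Definition orbit_Q (rho th : R) : R := Q_wp (orbit_w rho th) (orbit_p rho th).

(* d(lambda)/d(theta) along the closed orbit parametrised by the angle theta. *)
Definition time_density (rho th : R) : R :=
  let w := orbit_w rho th in let p := orbit_p rho th in
  (w - 2 * p + 2 * w^5) / (w - 2 * p) * ((3 * w - 2 * p) / (2 * w)) / dYw w.

Section ClosedOrbit.

Variable rho : R.
Hypotheses (rho_pos : 0 < rho) (rho_small : rho * rho < 1/12).

Lemma orbit_cos_small th : (rho * cos th) * (rho * cos th) < 1/12.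
Proof.
assert (c2 : cos th * cos th <= 1) by (pose proof (COS_bound th); nra).
replace ((rho * cos th) * (rho * cos th)) with ((rho * rho) * (cos th * cos th)) by ring.
nra.
Qed.

Lemma orbit_w_spec th : 0 < orbit_w rho th /\ Yw (orbit_w rho th) = rho * cos th.
Proof. apply Yinv_spec, orbit_cos_small. Qed.

Lemma energy_orbit th : energy (orbit_w rho th) (orbit_p rho th) = 3 * (rho * rho) - 1/4.
Proof.
rewrite energy_Yw, (proj2 (orbit_w_spec th)). unfold orbit_p.
pose proof (sin2_cos2 th) as E. unfold Rsqr in E.
transitivity (3 * ((rho * rho) * (sin th * sin th + cos th * cos th)) - 1/4); [ring|].
rewrite E. ring.
Qed.

Lemma orbit_wp_pos th : 0 < orbit_w rho th - 2 * orbit_p rho th.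
Proof.
pose proof (energy_orbit th) as E. destruct (orbit_w_spec th) as [Hw _]. unfold energy in E.
set (w := orbit_w rho th) in *. set (p := orbit_p rho th) in *.
assert (0 < w^6) by (apply pow_lt; lra).
assert (4 * (p * p) < w * w) by lra.
nra.
Qed.

Lemma is_derive_orbit_w th :
  is_derive (orbit_w rho) th (orbit_p rho th / dYw (orbit_w rho th)).
Proof.
assert (0 < dYw (orbit_w rho th)) by (apply dYw_pos, orbit_w_spec).
unfold orbit_w, orbit_p in *.
replace (- rho * sin th / dYw (Yinv (rho * cos th)))
  with (scal (- rho * sin th) (/ dYw (Yinv (rho * cos th))))
  by (unfold scal; simpl; unfold mult; simpl; field; lra).
apply (is_derive_comp Yinv (fun t => rho * cos t)).
- apply is_derive_Yinv, orbit_cos_small.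
- auto_derive; trivial. ring.
Qed.

Lemma is_derive_orbit_UQ th :
  is_derive (orbit_U rho) th (time_density rho th * VU (orbit_U rho th) (orbit_Q rho th)) /\
  is_derive (orbit_Q rho) th (time_density rho th * VQ (orbit_U rho th) (orbit_Q rho th)).
Proof.
pose proof (is_derive_orbit_w th) as Dw.
destruct (orbit_w_spec th) as [Hw HY]. pose proof (orbit_wp_pos th) as Hm.
pose proof (Yw_dYw _ Hw) as HYd. pose proof (dYw_pos _ Hw) as Hd.
assert (0 < orbit_w rho th ^ 5) by (apply pow_lt; lra).
assert (Ec : cos th = (orbit_w rho th ^ 5 - orbit_w rho th / 4) / dYw (orbit_w rho th) / rho).
{ rewrite <- HYd, HY. field. lra. }
unfold orbit_U, orbit_Q, time_density, U_wp, Q_wp, VU, VQ, orbit_p in *.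
split; auto_derive; try (repeat split; try (eexists; exact Dw); lra);
  change (Derive (fun x => orbit_w rho x) th) with (Derive (orbit_w rho) th);
  rewrite (is_derive_unique _ _ _ Dw); unfold orbit_p; rewrite Ec;
  set (w := orbit_w rho th) in *; field; repeat split; lra.
Qed.

Lemma time_density_pos th : 0 < time_density rho th.
Proof.
destruct (orbit_w_spec th) as [Hw _]. pose proof (orbit_wp_pos th) as Hm.
assert (0 < orbit_w rho th ^ 5) by (apply pow_lt; lra).
pose proof (dYw_pos _ Hw).
unfold time_density. apply Rdiv_lt_0_compat; [|lra].
apply Rmult_lt_0_compat; apply Rdiv_lt_0_compat; lra.
Qed.

Lemma time_density_continuous th : continuous (time_density rho) th.
Proof.
apply (ex_derive_continuous (V:=R_NormedModule)).
pose proof (is_derive_orbit_w th) as Dw.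
destruct (orbit_w_spec th) as [Hw _]. pose proof (orbit_wp_pos th) as Hm.
assert (0 < orbit_w rho th ^ 5) by (apply pow_lt; lra).
pose proof (dYw_pos _ Hw).
unfold time_density, dYw, orbit_p in *. auto_derive.
repeat split; try (eexists; exact Dw); nra.
Qed.

End ClosedOrbit.

Lemma orbit_w_periodic rho th : orbit_w rho (th + 2 * PI) = orbit_w rho th.
Proof.
unfold orbit_w. replace (th + 2 * PI) with (th + 2 * INR 1 * PI) by (simpl; ring).
now rewrite cos_period.
Qed.

Lemma orbit_p_periodic rho th : orbit_p rho (th + 2 * PI) = orbit_p rho th.
Proof.
unfold orbit_p. replace (th + 2 * PI) with (th + 2 * INR 1 * PI) by (simpl; ring).
now rewrite sin_period.
Qed.

Definition primitive (h : R -> R) (x : R) : R := RInt h 0 x.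
Definition primitive_inv (h : R -> R) (y : R) : R :=
  epsilon (inhabits 0) (fun x => primitive h x = y).

Section TimeChange.

Variables (h : R -> R) (P : R).
Hypotheses (h_cont : forall x, continuous h x) (h_pos : forall x, 0 < h x)
  (P_pos : 0 < P) (h_periodic : forall x, h (x + P) = h x).

Lemma is_derive_primitive x : is_derive (primitive h) x (h x).
Proof.
apply (is_derive_RInt (V:=R_NormedModule) h (primitive h) 0 x); [|apply h_cont].
exists (mkposreal 1 Rlt_0_1). intros y _.
apply (RInt_correct (V:=R_CompleteNormedModule)).
apply (ex_RInt_continuous (V:=R_CompleteNormedModule)). intros; apply h_cont.
Qed.

Lemma primitive_continuous x : continuity_pt (primitive h) x.
Proof.
apply continuity_pt_filterlim, (ex_derive_continuous (V:=R_NormedModule)).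
eexists. apply is_derive_primitive.
Qed.

Lemma primitive_0 : primitive h 0 = 0.
Proof. unfold primitive. now rewrite RInt_point. Qed.

Lemma primitive_lt a b : a < b -> primitive h a < primitive h b.
Proof.
intros Hab.
destruct (MVT_gen (primitive h) a b h) as [c [_ E]].
- intros x _. apply is_derive_primitive.
- intros x _. apply primitive_continuous.
- pose proof (h_pos c). nra.
Qed.

Lemma primitive_inj a b : primitive h a = primitive h b -> a = b.
Proof.
intros E. destruct (Rtotal_order a b) as [l|[e|l]]; auto; apply primitive_lt in l; lra.
Qed.

Lemma primitive_periodic x : primitive h (x + P) = primitive h x + primitive h P.
Proof.
assert (E : primitive h (x + P) - primitive h x = primitive h (0 + P) - primitive h 0).
{ apply (is_derive_0_eq (fun t => primitive h (t + P) - primitive h t)). intros t _. replace 0 with (1 * h (t + P) - h t) by (rewrite h_periodic; ring).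
  apply (is_derive_minus (fun t => primitive h (t + P))); [|apply is_derive_primitive].
  apply (is_derive_comp (primitive h) (fun t => t + P)); [apply is_derive_primitive|].
  auto_derive; trivial. }
rewrite Rplus_0_l, primitive_0 in E. lra.
Qed.

Lemma primitive_mult_period (n : nat) :
  primitive h (INR n * P) = INR n * primitive h P /\
  primitive h (- (INR n * P)) = - (INR n * primitive h P).
Proof.
induction n as [|n [IH1 IH2]].
- simpl. rewrite !Rmult_0_l, Ropp_0, primitive_0. split; ring.
- rewrite S_INR. split.
  + replace ((INR n + 1) * P) with (INR n * P + P) by ring.
    rewrite primitive_periodic, IH1. ring.
  + pose proof (primitive_periodic (- ((INR n + 1) * P))) as E.
    replace (- ((INR n + 1) * P) + P) with (- (INR n * P)) in E by ring. lra.
Qed.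

Lemma primitive_surj y : exists x, primitive h x = y.
Proof.
assert (T0 : 0 < primitive h P) by (rewrite <- primitive_0; now apply primitive_lt).
destruct (INR_archimed (primitive h P) (Rabs y) T0) as [n Hn].
destruct (primitive_mult_period n) as [E1 E2].
assert (0 < INR n).
{ destruct n; [simpl in Hn; pose proof (Rabs_pos y); lra | apply lt_0_INR; lia]. }
destruct (Rabs_def2 y (INR n * primitive h P)) as [Ha1 Ha2]; [lra|].
destruct (IVT (fun x => primitive h x - y) (- (INR n * P)) (INR n * P)) as [z [_ Hz]].
- intros x. apply continuity_pt_minus; [apply primitive_continuous | apply continuity_pt_const].
  now intros ? ?.
- nra.
- simpl. lra.
- simpl. lra.
- exists z. simpl in Hz. lra.
Qed.

Lemma primitive_primitive_inv y : primitive h (primitive_inv h y) = y.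
Proof. unfold primitive_inv. apply epsilon_spec, primitive_surj. Qed.

Lemma primitive_inv_primitive x : primitive_inv h (primitive h x) = x.
Proof. apply primitive_inj, primitive_primitive_inv. Qed.

Lemma primitive_inv_periodic y :
  primitive_inv h (y + primitive h P) = primitive_inv h y + P.
Proof.
rewrite <- (primitive_primitive_inv y) at 1.
now rewrite <- primitive_periodic, primitive_inv_primitive.
Qed.

Lemma primitive_inv_le a b : a <= b -> primitive_inv h a <= primitive_inv h b.
Proof.
intros Hab. destruct (Rle_lt_dec (primitive_inv h a) (primitive_inv h b)) as [l|l]; auto.
apply primitive_lt in l. rewrite !primitive_primitive_inv in l. lra.
Qed.

Lemma is_derive_primitive_inv y : is_derive (primitive_inv h) y (/ h (primitive_inv h y)).
Proof.
set (g := primitive_inv h). set (f := primitive h).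
assert (fg : forall x, f (g x) = x) by apply primitive_primitive_inv.
assert (Df : forall a : R, g (y - 1) <= a <= g (y + 1) -> derivable_pt f a).
{ intros a _. exists (h a). apply is_derive_Reals, is_derive_primitive. }
assert (Cg : continuity_pt g y).
{ apply (continuity_pt_recip_interv f g (g y - 1) (g y + 1)); try lra.
  - intros a b _ ab _. now apply primitive_lt.
  - intros x _ _. apply fg.
  - intros x H1 H2. apply primitive_inv_le in H1, H2. fold g in H1, H2.
    rewrite !primitive_inv_primitive in H1, H2. lra.
  - intros a _. apply primitive_continuous.
  - rewrite <- (fg y) at 2 3. split; apply primitive_lt; lra. }
assert (Hin : g (y - 1) <= g y <= g (y + 1)) by (split; apply primitive_inv_le; lra).
pose proof (derivable_pt_lim_recip_interv f g (y - 1) (y + 1) y Df Cg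
  ltac:(lra) ltac:(lra) Hin ltac:(intros; apply fg)) as D.
rewrite (derive_pt_eq_0 f (g y) (h (g y)) (Df (g y) Hin))
  in D by apply is_derive_Reals, is_derive_primitive.
apply is_derive_Reals. replace (/ h (g y)) with (1 / h (g y)) by (field; apply Rgt_not_eq, h_pos).
apply D. apply Rgt_not_eq, h_pos.
Qed.

End TimeChange.

Lemma time_density_periodic rho th : time_density rho (th + 2 * PI) = time_density rho th.
Proof. unfold time_density. now rewrite orbit_w_periodic, orbit_p_periodic. Qed.

Lemma polar_coordinates r x y : 0 < r -> x * x + y * y = r * r ->
  exists th, r * cos th = x /\ r * sin th = y.
Proof.
intros Hr E.
assert (Hc : -1 <= x / r <= 1) by (split; [apply Rle_div_r | apply Rle_div_l]; nra).
set (s := sqrt (1 - (x / r)²)).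
assert (Hs : 0 <= s) by apply sqrt_pos.
assert (Ess : s * s = 1 - (x / r)²) by (apply sqrt_sqrt; unfold Rsqr in *; nra).
assert (Es : r * s = Rabs y).
{ apply eq_of_sq_eq; [|pose proof (Rabs_pos y); apply Rmult_le_pos; [apply Rmult_le_pos|]; lra].
  rewrite <- Rabs_mult, Rabs_pos_eq by nra.
  transitivity (r * r * (s * s)); [ring|]. rewrite Ess. unfold Rsqr. field_simplify; lra. }
assert (Ec : r * cos (acos (x / r)) = x) by (rewrite cos_acos by exact Hc; field; lra).
destruct (Rle_lt_dec 0 y) as [Hy|Hy].
- exists (acos (x / r)). rewrite sin_acos by exact Hc. fold s.
  rewrite Rabs_pos_eq in Es; auto.
- exists (- acos (x / r)). rewrite cos_neg, sin_neg, sin_acos by exact Hc. fold s.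
  rewrite Rabs_left in Es; auto. split; [exact Ec | lra].
Qed.

Lemma orbit_level_set rho u q : 0 < rho -> rho * rho < 1/12 ->
  (in_box u q /\ Fint u q = 3 * (rho * rho) - 1/4) <->
  (exists th, orbit_U rho th = u /\ orbit_Q rho th = q).
Proof.
intros Hr Hs. split.
- intros [Hb HF]. destruct (wp_of_in_box u q Hb) as [w [p [Hw [Hp [<- <-]]]]].
  rewrite Fint_wp, energy_Yw in HF by assumption.
  assert (Hc : Yw w * Yw w + (- p) * (- p) = rho * rho) by lra.
  destruct (polar_coordinates rho (Yw w) (- p) Hr Hc) as [th [Ec Es]].
  exists th. unfold orbit_U, orbit_Q.
  assert (orbit_w rho th = w) as ->; [|unfold orbit_p; replace (- rho * sin th) with p by lra; now split].
  destruct (orbit_w_spec rho Hs th) as [Hw' HY].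
  apply Yw_inj; lra.
- intros [th [<- <-]]. pose proof (orbit_wp_pos rho Hs th) as Hp.
  destruct (orbit_w_spec rho Hs th) as [Hw _].
  unfold orbit_U, orbit_Q. split; [now apply in_box_wp|].
  rewrite Fint_wp by assumption. now apply energy_orbit.
Qed.

Lemma closed_orbit_of_level C : -1/4 < C < 0 ->
  exists (T : R) (U Q : R -> R),
    0 < T /\
    is_solution m_infty p_infty U Q /\
    (forall l : R, U (l + T) = U l /\ Q (l + T) = Q l) /\
    (forall u q : R, (in_box u q /\ Fint u q = C) <-> (exists l : R, U l = u /\ Q l = q)).
Proof.
intros HC.
set (rho := sqrt ((C + 1/4) / 3)).
assert (Hr : 0 < rho) by (apply sqrt_lt_R0; lra).
assert (Er : rho * rho = (C + 1/4) / 3) by (apply sqrt_sqrt; lra).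
assert (Hs : rho * rho < 1/12) by lra.
set (h := time_density rho).
assert (h_cont : forall x, continuous h x) by (intros; now apply time_density_continuous).
assert (h_pos : forall x, 0 < h x) by (intros; now apply time_density_pos).
assert (P_pos : 0 < 2 * PI) by (pose proof PI_RGT_0; lra).
assert (h_per : forall x, h (x + 2 * PI) = h x) by apply time_density_periodic.
set (theta := primitive_inv h).
exists (primitive h (2 * PI)), (fun l => orbit_U rho (theta l)), (fun l => orbit_Q rho (theta l)).
split; [|split; [|split]].
- rewrite <- (primitive_0 h). now apply primitive_lt.
- intros l _ _. split.
  { unfold orbit_U, orbit_Q. apply in_box_wp; [apply orbit_w_spec | apply orbit_wp_pos]; assumption. }
  pose proof (is_derive_primitive_inv h (2 * PI) h_cont h_pos P_pos h_per l) as Dt.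
  destruct (is_derive_orbit_UQ rho Hr Hs (theta l)) as [DU DQ].
  pose proof (h_pos (theta l)).
  split; [pose proof (is_derive_comp _ _ l _ _ DU Dt) as D
         |pose proof (is_derive_comp _ _ l _ _ DQ Dt) as D];
  match goal with |- is_derive _ _ ?v =>
    replace v with (/ h (theta l) * (h (theta l) * v)) by (field; lra) end;
  exact D.
- intros l. unfold theta.
  rewrite (primitive_inv_periodic h (2 * PI)) by assumption.
  unfold orbit_U, orbit_Q. now rewrite orbit_w_periodic, orbit_p_periodic.
- intros u q. replace C with (3 * (rho * rho) - 1/4) by lra.
  rewrite orbit_level_set by assumption. split.
  + intros [th Hth]. exists (primitive h th). unfold theta.
    now rewrite (primitive_inv_primitive h (2 * PI)).
  + intros [l Hl]. now exists (theta l).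
Qed.

Lemma box_margin_of_energy w p C : 0 < w -> 0 < w - 2 * p -> energy w p <= C -> C < 0 ->
  C * C / 4 <= U_wp w p /\ C * C / 4 <= 1 - U_wp w p /\
  C * C / 4 <= Q_wp w p /\ C * C / 4 <= 1 - Q_wp w p.
Proof.
intros Hw Hp HE HC.
assert (HC1 : -1/4 <= C) by (pose proof (energy_ge w p); lra).
unfold energy in HE.
set (X := w * w) in *. set (r := p / w).
assert (X0 : 0 < X) by (unfold X; nra).
assert (Er : p = r * w) by (unfold r; field; lra).
assert (HE' : X * (X * X - 3/4 + 3 * (r * r)) <= C).
{ replace (w^6) with (X * X * X) in HE by (unfold X; ring). rewrite Er in HE.
  replace (r * w * (r * w)) with (r * r * X) in HE by (unfold X; ring). nra. }
assert (r1 : 0 < 1 - 2 * r) by (rewrite Er in Hp; nra).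
assert (h1 : X * X + 3 * (r * r) < 3/4) by nra.
assert (h2 : -4 * C / 3 <= X).
{ assert (0 <= X * (X * X + 3 * (r * r))) by (apply Rmult_le_pos; nra). lra. }
assert (h3 : -2 * C / 3 <= 1 - 2 * r).
{ assert (X < 1) by nra.
  assert (0 <= X * (X * X)) by (apply Rmult_le_pos; nra).
  assert (X * (3/4 - 3 * (r * r)) <= 3/4 - 3 * (r * r)) by nra.
  assert (r < 1/2) by nra. nra. }
assert (D4 : 0 < 1 - 2 * r + 2 * (X * X) < 4) by nra.
assert (EU : U_wp w p = 2 * (X * X) / (1 - 2 * r + 2 * (X * X))).
{ unfold U_wp. rewrite Er.
  replace (w - 2 * (r * w) + 2 * w ^ 5) with (w * (1 - 2 * r + 2 * (X * X))) by (unfold X; ring).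
  unfold X. field. unfold X in D4. lra. }
assert (EQ : Q_wp w p = (1 - 2 * r) / (3 - 2 * r)).
{ unfold Q_wp. rewrite Er. field. split; lra. }
rewrite EU, EQ.
replace (1 - 2 * (X * X) / (1 - 2 * r + 2 * (X * X))) with
  ((1 - 2 * r) / (1 - 2 * r + 2 * (X * X))) by (field; lra).
replace (1 - (1 - 2 * r) / (3 - 2 * r)) with (2 / (3 - 2 * r)) by (field; lra).
assert (HC2 : C * C <= - C / 4) by nra.
assert (HX2 : C * C <= 2 * (X * X)) by nra.
assert (r2 : -1/2 < r) by nra.
repeat split; apply (Rle_div_r (C * C / 4)); nra.
Qed.

Lemma box_margin_of_Fint U Q C : in_box U Q -> Fint U Q <= C -> C < 0 ->
  C * C / 4 <= U /\ C * C / 4 <= 1 - U /\ C * C / 4 <= Q /\ C * C / 4 <= 1 - Q.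
Proof.
intros Hb HF HC. destruct (wp_of_in_box U Q Hb) as [w [p [Hw [Hp [<- <-]]]]].
rewrite Fint_wp in HF by assumption. now apply box_margin_of_energy.
Qed.

Lemma first_exit (A : R -> Prop) :
  A 0 -> ~ A 1 -> (forall t, 0 <= t <= 1 -> A t -> locally t A) ->
  exists s, 0 < s <= 1 /\ (forall t, 0 <= t < s -> A t) /\ ~ A s.
Proof.
intros A0 A1 Aopen.
set (E := fun t => 0 <= t <= 1 /\ forall t', 0 <= t' <= t -> A t').
assert (E0 : E 0) by (split; [lra | intros t' Ht'; replace t' with 0 by lra; exact A0]).
assert (Eb : bound E) by (exists 1; intros x [Hx _]; lra).
destruct (completeness E Eb (ex_intro _ 0 E0)) as [s [Hub Hlub]].
assert (s0 : 0 <= s) by now apply Hub.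
assert (s1 : s <= 1) by (apply Hlub; intros x [Hx _]; lra).
assert (Hbelow : forall t, 0 <= t < s -> A t).
{ intros t Ht. destruct (classic (exists x, E x /\ t < x)) as [[x [[_ Ex] Hx]] | N].
  - apply Ex. lra.
  - exfalso. assert (s <= t); [|lra]. apply Hlub. intros x Ex.
    destruct (Rle_lt_dec x t); auto. exfalso. apply N. now exists x. }
assert (Hs : ~ A s).
{ intros As. destruct (Req_dec s 1) as [e|e]; [subst s; contradiction|].
  destruct (Aopen s (conj s0 s1) As) as [eps Heps].
  set (t := Rmin 1 (s + eps / 2)).
  assert (Ht : s < t <= 1) by (unfold t, Rmin; destruct (Rle_dec 1 (s + eps / 2)); pose proof (cond_pos eps); lra).
  assert (t <= s); [|lra].
  apply Hub. split; [lra|]. intros t' Ht'. destruct (Rlt_le_dec t' s); [apply Hbelow; lra|].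
  apply Heps. change (Rabs (t' - s) < eps). apply Rabs_def1; unfold t, Rmin in *;
    destruct (Rle_dec 1 (s + eps / 2)); pose proof (cond_pos eps); lra. }
exists s. split; [|split; [exact Hbelow | exact Hs]].
split; [|exact s1]. destruct (Req_dec s 0) as [e|e]; [subst s; contradiction | lra].
Qed.

Lemma continuous_ge_left (f : R -> R) s a : continuous f s -> 0 < s ->
  (forall t, 0 <= t < s -> a <= f t) -> a <= f s.
Proof.
intros Hf Hs Hle. destruct (Rle_lt_dec a (f s)) as [h|h]; auto. exfalso.
assert (Hlt : locally s (fun t => f t < a)).
{ apply (Hf (fun z => z < a)). apply (locally_interval _ (f s) m_infty a); simpl; auto. }
destruct Hlt as [eps Heps].
set (t := Rmax 0 (s - eps / 2)).
assert (Ht : 0 <= t < s) by (unfold t, Rmax; destruct (Rle_dec 0 (s - eps / 2)); pose proof (cond_pos eps); lra).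
specialize (Hle t Ht). assert (f t < a); [|lra].
apply Heps. change (Rabs (t - s) < eps). apply Rabs_def1; unfold t, Rmax in *;
  destruct (Rle_dec 0 (s - eps / 2)); pose proof (cond_pos eps); lra.
Qed.

Lemma locally_between_of_continuous (f : R -> R) t a b :
  continuous f t -> a < f t < b -> locally t (fun y => a < f y < b).
Proof. intros Hf H. apply (Hf (fun z => a < z < b)), (locally_interval _ _ a b); tauto. Qed.

Lemma continuous_Fint_comp (g1 g2 : R -> R) t :
  continuous g1 t -> continuous g2 t -> in_box (g1 t) (g2 t) ->
  continuous (fun y => Fint (g1 y) (g2 y)) t.
Proof. intros c1 c2 Hb. apply (continuous_comp_2 g1 g2 Fint); auto. now apply Fint_continuous. Qed.

Lemma sublevel_locally C (g1 g2 : R -> R) t :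
  continuous g1 t -> continuous g2 t -> in_box (g1 t) (g2 t) -> Fint (g1 t) (g2 t) < C ->
  locally t (fun y => in_box (g1 y) (g2 y) /\ Fint (g1 y) (g2 y) < C).
Proof.
intros c1 c2 [B1 B2] HF.
pose proof (locally_between_of_continuous g1 t 0 1 c1 B1) as L1.
pose proof (locally_between_of_continuous g2 t 0 1 c2 B2) as L2.
pose proof (locally_between_of_continuous _ t (Fint (g1 t) (g2 t) - 1) C
              (continuous_Fint_comp g1 g2 t c1 c2 (conj B1 B2)) ltac:(lra)) as L3.
apply (filter_imp (fun y => (0 < g1 y < 1 /\ 0 < g2 y < 1) /\
                            Fint (g1 t) (g2 t) - 1 < Fint (g1 y) (g2 y) < C)).
- intros y [Hb H3]. split; [exact Hb | tauto].
- now apply filter_and; [apply filter_and|].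
Qed.

Lemma level_set_surrounds_centre C (g1 g2 : R -> R) : -1/4 < C < 0 ->
  (forall t, 0 <= t <= 1 -> continuous g1 t /\ continuous g2 t) ->
  g1 0 = 1/3 -> g2 0 = 1/3 -> ~ in_box (g1 1) (g2 1) ->
  exists t, 0 <= t <= 1 /\ in_box (g1 t) (g2 t) /\ Fint (g1 t) (g2 t) = C.
Proof.
intros HC Hg G1 G2 Hout.
set (A := fun t => in_box (g1 t) (g2 t) /\ Fint (g1 t) (g2 t) < C).
assert (A0 : A 0).
{ unfold A. rewrite G1, G2, (proj2 (proj2 centre_fixed_point)). split; [split|]; lra. }
assert (A1 : ~ A 1) by (intros [Hb _]; contradiction).
assert (Aopen : forall t, 0 <= t <= 1 -> A t -> locally t A).
{ intros t Ht [Hb HF]. destruct (Hg t Ht). now apply sublevel_locally. }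
destruct (first_exit A A0 A1 Aopen) as [s [Hs [Hbelow Hnot]]].
destruct (Hg s ltac:(lra)) as [c1 c2].
set (m := C * C / 4).
assert (Hmargin : forall t, 0 <= t < s ->
          m <= g1 t /\ m <= 1 - g1 t /\ m <= g2 t /\ m <= 1 - g2 t).
{ intros t Ht. destruct (Hbelow t Ht). apply box_margin_of_Fint; tauto || lra. }
assert (Hbs : in_box (g1 s) (g2 s)).
{ assert (0 < m) by (unfold m; nra).
  assert (m <= g1 s) by (apply continuous_ge_left; try lra; auto; apply Hmargin).
  assert (m <= 1 - g1 s).
  { apply (continuous_ge_left (fun t => 1 - g1 t)); [|lra|apply Hmargin].
    apply continuous_Rminus; [apply continuous_const | exact c1]. }
  assert (m <= g2 s) by (apply continuous_ge_left; try lra; auto; apply Hmargin).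
  assert (m <= 1 - g2 s).
  { apply (continuous_ge_left (fun t => 1 - g2 t)); [|lra|apply Hmargin].
    apply continuous_Rminus; [apply continuous_const | exact c2]. }
  split; split; lra. }
assert (Hle : - C <= - Fint (g1 s) (g2 s)).
{ apply (continuous_ge_left (fun t => - Fint (g1 t) (g2 t))); [|lra|].
  - apply continuous_Ropp, continuous_Fint_comp; assumption.
  - intros t Ht. destruct (Hbelow t Ht). lra. }
exists s. split; [lra|]. split; [exact Hbs|].
destruct (Rle_lt_dec C (Fint (g1 s) (g2 s))) as [h|h]; [lra|].
exfalso. now apply Hnot.
Qed.

Theorem mainTheorem9 :
  (forall (a b : Rbar) (U Q : R -> R), is_solution a b U Q ->
     forall l1 l2 : R, Rbar_lt a l1 -> Rbar_lt l1 b -> Rbar_lt a l2 -> Rbar_lt l2 b ->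
       Fint (U l1) (Q l1) = Fint (U l2) (Q l2)) /\
  (VU (1/3) (1/3) = 0 /\ VQ (1/3) (1/3) = 0 /\ Fint (1/3) (1/3) = -1/4) /\
  (forall (b : Rbar) (U Q : R -> R), is_solution m_infty b U Q ->
     is_lim U m_infty (3/4) -> is_lim Q m_infty 0 ->
     forall l : R, Rbar_lt l b -> Fint (U l) (Q l) = 0) /\
  (forall C : R, -1/4 < C < 0 ->
     exists (T : R) (U Q : R -> R),
       0 < T /\
       is_solution m_infty p_infty U Q /\
       (forall l : R, U (l + T) = U l /\ Q (l + T) = Q l) /\
       (forall u q : R, (in_box u q /\ Fint u q = C) <->
                        (exists l : R, U l = u /\ Q l = q)) /\
       (forall g1 g2 : R -> R,
          (forall t : R, 0 <= t <= 1 -> continuous g1 t /\ continuous g2 t) ->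
          g1 0 = 1/3 -> g2 0 = 1/3 -> ~ in_box (g1 1) (g2 1) ->
          exists t : R, 0 <= t <= 1 /\ in_box (g1 t) (g2 t) /\ Fint (g1 t) (g2 t) = C)).
Proof.
split; [exact Fint_constant_on_solution|].
split; [exact centre_fixed_point|].
split; [exact Fint_regular_orbit|].
intros C HC.
destruct (closed_orbit_of_level C HC) as [T [U [Q [HT [Hsol [Hper Hlevel]]]]]].
exists T, U, Q. repeat (split; [assumption|]).
intros g1 g2. now apply level_set_surrounds_centre.
Qed.
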